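(* Let $\mathbf a^*=\{a^*_i\}_{i\in\mathbb Z}$ be a finitely supported mask such that the stationary subdivision scheme $\{S_{\mathbf a^*}\}$ (using the mask $\mathbf a^*$ at every level) is convergent, and suppose there is a positive integer $n$ with $\mu^*:=\|(S_{\mathbf q^*})^n\|<1$, where $\{S_{\mathbf q^*}\}$ is the difference scheme of $\{S_{\mathbf a^*}\}$. Let $\{S_{\mathbf a^{[k]}},\,k\ge 0\}$ be a local non-stationary subdivision scheme that reproduces constants and is asymptotically similar to $\{S_{\mathbf a^*}\}$, i.e. $\lim_{k\to\infty}\|\mathbf a^{[k]}-\mathbf a^*\|=0$. Then $\{S_{\mathbf a^{[k]}},\,k\ge 0\}$ is convergent, and for every $\eta\in((\mu^* )^{1/n},1)$ there exists a constant $C>0$ such that for every bounded initial sequence $\mathbf f^{[0]}$, $$\Big\|S^\infty_{\{\mathbf a^{[k]},\,k\ge0\}}\mathbf f^{[0]}-\mathcal{PL}(\mathbf f^{[k+1]})\Big\|\le C\,\eta^k\,\|\Delta\mathbf f^{[0]}\|,\qquad k\ge 0.$$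
   Context: A (binary, uniform) subdivision scheme $\{S_{\mathbf a^{[k]}},\,k\ge0\}$ is given by finitely supported masks $\mathbf a^{[k]}=\{a^{[k]}_i\}_{i\in\mathbb Z}$ and operators $(S_{\mathbf a^{[k]}}\mathbf f)_i=\sum_{j\in\mathbb Z}a^{[k]}_{i-2j}f_j$ on sequences $\mathbf f\in\mathbb R^{\mathbb Z}$; starting from $\mathbf f^{[0]}$ one sets $\mathbf f^{[k+1]}=S_{\mathbf a^{[k]}}\mathbf f^{[k]}$, the values $f^{[k]}_i$ being attached to the points $i2^{-k}$. The scheme is local: there is a positive integer $N$ with $\{i: a^{[k]}_i\neq0\}\subseteq[-N,N]$ for all $k$. It is stationary if $\mathbf a^{[k]}$ does not depend on $k$. All norms are sup-norms: for sequences $\|\mathbf f\|=\sup_i|f_i|$, and for operators $\|S_{\mathbf a}\|=\max\big(\sum_i|a_{2i}|,\sum_i|a_{2i+1}|\big)$ (the operator norm on bounded sequences with the sup-norm). The scheme reproduces constants if $\sum_i a^{[k]}_{2i}=\sum_i a^{[k]}_{2i+1}=1$ for all $k$; then the symbol $a^{[k]}(z)=\sum_i a^{[k]}_iz^i$ factors as $(1+z)q^{[k]}(z)$ with $q^{[k]}_i=\sum_{j\le i}(-1)^{i-j}a^{[k]}_j$, and $\{S_{\mathbf q^{[k]}},\,k\ge0\}$ is called the difference scheme; it satisfies $\Delta\mathbf f^{[k+1]}=S_{\mathbf q^{[k]}}\Delta\mathbf f^{[k]}$, where $(\Delta\mathbf f)_i=f_i-f_{i-1}$. $\mathcal{PL}(\mathbf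 f^{[k]})$ denotes the piecewise linear function on $\mathbb R$ interpolating $f^{[k]}_i$ at $i2^{-k}$. The scheme is convergent if for every bounded $\mathbf f^{[0]}$ the functions $\mathcal{PL}(\mathbf f^{[k]})$ converge uniformly on $\mathbb R$; the limit is denoted $S^\infty_{\{\mathbf a^{[k]},\,k\ge0\}}\mathbf f^{[0]}$. Two schemes $\{S_{\mathbf a^{[k]}}\}$, $\{S_{\mathbf a^{*[k]}}\}$ are asymptotically similar if $\lim_{k\to\infty}\|\mathbf a^{[k]}-\mathbf a^{*[k]}\|=0$. *)

From Stdlib Require Import Reals Lra Lia ZArith List.
From Coquelicot Require Import Coquelicot.
Open Scope R_scope.

Definition zseq := Z -> R.

Definition sumN (N : nat) (g : Z -> R) : R :=
  fold_right Rplus 0 (map (fun m : nat => g (Z.of_nat m - Z.of_nat N)%Z)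
                          (seq 0 (2 * N + 1))).

Definition supported_in (N : nat) (a : zseq) : Prop :=
  forall i : Z, (Z.of_nat N < Z.abs i)%Z -> a i = 0.

(* subdivision operator (S_a f)_i = sum_j a_{i-2j} f_j, for a mask supported
   in [-N,N]: sum over l = i - 2j in [-N,N] with l = i mod 2. *)
Definition subdiv (N : nat) (a : zseq) (f : zseq) : zseq :=
  fun i => sumN N (fun l => if Z.even (i - l) then a l * f ((i - l) / 2)%Z else 0).

Definition diffmask (N : nat) (a : zseq) : zseq :=
  fun i => sumN N (fun l => if (l <=? i)%Z
                           then (if Z.even (i - l) then a l else - a l) else 0).

Definition reproduces_constants (N : nat) (a : zseq) : Prop :=
  sumN N (fun l => if Z.even l then a l else 0) = 1 /\
  sumN N (fun l => if Z.even l then 0 else a l) = 1.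

(* mask norm ||S_a|| = max(sum |a_{2i}|, sum |a_{2i+1}|), a supported in [-N,N] *)
Definition mask_norm (N : nat) (a : zseq) : R :=
  Rmax (sumN N (fun l => if Z.even l then Rabs (a l) else 0))
       (sumN N (fun l => if Z.even l then 0 else Rabs (a l))).

Definition bounded_seq (f : zseq) : Prop := exists M : R, forall i, Rabs (f i) <= M.

Definition seq_norm (f : zseq) : R :=
  real (Lub_Rbar (fun x => exists i, x = Rabs (f i))).

Definition op_norm (T : zseq -> zseq) : R :=
  real (Lub_Rbar (fun x => exists f, bounded_seq f /\ seq_norm f <= 1 /\ x = seq_norm (T f))).

Definition Dseq (f : zseq) : zseq := fun i => f i - f (i - 1)%Z.

Fixpoint level (N : nat) (A : nat -> zseq) (f0 : zseq) (k : nat) : zseq :=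
  match k with
  | O => f0
  | S k' => subdiv N (A k') (level N A f0 k')
  end.

(* piecewise linear interpolant of values g_i at points i 2^-k *)
Definition PL (k : nat) (g : zseq) (x : R) : R :=
  let t := x * 2 ^ k in
  let i := Int_part t in
  g i + (t - IZR i) * (g (i + 1)%Z - g i).

Definition is_limit_function (N : nat) (A : nat -> zseq) (f0 : zseq) (F : R -> R) : Prop :=
  forall eps : R, 0 < eps -> exists K : nat, forall k : nat, (K <= k)%nat ->
    forall x : R, Rabs (PL k (level N A f0 k) x - F x) < eps.

Definition convergent (N : nat) (A : nat -> zseq) : Prop :=
  forall f0 : zseq, bounded_seq f0 -> exists F : R -> R, is_limit_function N A f0 F.

(* Along the levels, [Delta f^[k+1] = S_(q^[k]) Delta f^[k]], where the
   difference mask [q^[k]] exists because [a^[k]] reproduces constants.  As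
   [q^[k]] tends to [q*], a block of [n] steps of the difference scheme is a
   small perturbation of [(S_(q* ))^n], so from some level on it contracts by
   [eta^n > mu*]; hence [||Delta f^[k]|| <= C eta^k ||Delta f^[0]||].
   Consecutive piecewise linear interpolants differ by [O(||Delta f^[k]||)],
   so they converge uniformly, and summing the geometric tail gives the error
   bound. *)

From Stdlib Require Import Reals ZArith.
From Coquelicot Require Import Coquelicot.
From Stdlib Require Import Lra Lia List FunctionalExtensionality.
Open Scope R_scope.

(** * Finite sums over integer windows *)

Fixpoint sumZ (lo : Z) (len : nat) (g : Z -> R) : R :=
  match len with O => 0 | S len' => g lo + sumZ (lo + 1)%Z len' g end.

Lemma sumN_sumZ N g : sumN N g = sumZ (- Z.of_nat N) (2 * N + 1) g.
Proof.
  assert (Hseq : forall len s,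
    fold_right Rplus 0 (map (fun m : nat => g (Z.of_nat m - Z.of_nat N)%Z) (seq s len))
    = sumZ (Z.of_nat s - Z.of_nat N) len g).
  { induction len as [|len IH]; intros s; simpl; auto.
    rewrite IH. do 2 f_equal. lia. }
  unfold sumN. rewrite Hseq. reflexivity.
Qed.

Lemma sumZ_ext lo len g h :
  (forall l, (lo <= l < lo + Z.of_nat len)%Z -> g l = h l) -> sumZ lo len g = sumZ lo len h.
Proof.
  revert lo; induction len as [|len IH]; intros lo H; simpl; auto.
  rewrite H by lia. rewrite (IH (lo + 1)%Z); auto; intros; apply H; lia.
Qed.

Lemma sumZ_plus lo len g h : sumZ lo len (fun l => g l + h l) = sumZ lo len g + sumZ lo len h.
Proof. revert lo; induction len as [|len IH]; intros; simpl; [|rewrite IH]; lra. Qed.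

Lemma sumZ_minus lo len g h : sumZ lo len (fun l => g l - h l) = sumZ lo len g - sumZ lo len h.
Proof. revert lo; induction len as [|len IH]; intros; simpl; [|rewrite IH]; lra. Qed.

Lemma sumZ_mult_l lo len c g : sumZ lo len (fun l => c * g l) = c * sumZ lo len g.
Proof. revert lo; induction len as [|len IH]; intros; simpl; [|rewrite IH]; lra. Qed.

Lemma sumZ_const lo len c : sumZ lo len (fun _ => c) = INR len * c.
Proof.
  revert lo; induction len as [|len IH]; intros; simpl sumZ; [simpl; lra|].
  rewrite IH, S_INR; lra.
Qed.

Lemma sumZ_le lo len g h :
  (forall l, (lo <= l < lo + Z.of_nat len)%Z -> g l <= h l) -> sumZ lo len g <= sumZ lo len h.
Proof.
  revert lo; induction len as [|len IH]; intros lo H; simpl; [lra|].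
  apply Rplus_le_compat; [apply H; lia | apply IH; intros; apply H; lia].
Qed.

Lemma sumZ_Rabs lo len g : Rabs (sumZ lo len g) <= sumZ lo len (fun l => Rabs (g l)).
Proof.
  revert lo; induction len as [|len IH]; intros; simpl; [rewrite Rabs_R0; lra|].
  eapply Rle_trans; [apply Rabs_triang|]. specialize (IH (lo + 1)%Z). lra.
Qed.

Lemma sumZ_0 lo len g :
  (forall l, (lo <= l < lo + Z.of_nat len)%Z -> g l = 0) -> sumZ lo len g = 0.
Proof. intros H. rewrite (sumZ_ext _ _ _ (fun _ => 0)), sumZ_const by auto. lra. Qed.

Lemma sumZ_app lo a b g : sumZ lo (a + b) g = sumZ lo a g + sumZ (lo + Z.of_nat a) b g.
Proof.
  revert lo; induction a as [|a IH]; intros; simpl.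
  - rewrite Z.add_0_r. lra.
  - rewrite IH. replace (lo + 1 + Z.of_nat a)%Z with (lo + Z.pos (Pos.of_succ_nat a))%Z by lia.
    lra.
Qed.

Lemma sumZ_shift lo len c g : sumZ lo len (fun l => g (l + c)%Z) = sumZ (lo + c) len g.
Proof.
  revert lo; induction len as [|len IH]; intros; simpl; auto.
  rewrite IH. do 2 f_equal. lia.
Qed.

Lemma sumZ_widen p m d1 d2 g :
  (forall l, (l < p \/ p + Z.of_nat m <= l)%Z -> g l = 0) ->
  sumZ (p - Z.of_nat d1) (d1 + m + d2) g = sumZ p m g.
Proof.
  intros H. rewrite !sumZ_app.
  rewrite (sumZ_0 (p - Z.of_nat d1)), (sumZ_0 (_ + _)%Z d2) by (intros; apply H; lia).
  replace (p - Z.of_nat d1 + Z.of_nat d1)%Z with p by lia. lra.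
Qed.

Lemma sumZ_indicator lo len c v :
  sumZ lo len (fun l => if Z.eqb l c then v else 0) =
  if ((lo <=? c) && (c <? lo + Z.of_nat len))%Z%bool then v else 0.
Proof.
  revert lo; induction len as [|len IH]; intros; simpl.
  - destruct (Z.leb_spec lo c), (Z.ltb_spec c (lo + 0)); simpl; auto; lia.
  - rewrite IH.
    destruct (Z.eqb_spec lo c), (Z.leb_spec (lo + 1) c), (Z.ltb_spec c (lo + 1 + Z.of_nat len)),
      (Z.leb_spec lo c), (Z.ltb_spec c (lo + Z.pos (Pos.of_succ_nat len))); simpl; lra || lia.
Qed.

(** * Masks and the difference scheme *)

Definition mask_l1 (N : nat) (a : zseq) : R := sumN N (fun l => Rabs (a l)).

(* The symbol of [a] vanishes at [z = -1], which is what makes the difference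
   mask supported in [[-N, N]]. *)
Definition balanced (N : nat) (a : zseq) : Prop :=
  sumN N (fun l => if Z.even l then a l else 0) = sumN N (fun l => if Z.even l then 0 else a l).

Lemma reproduces_constants_balanced N a : reproduces_constants N a -> balanced N a.
Proof. intros [HE HO]. unfold balanced. congruence. Qed.

Lemma mask_l1_ge0 N a : 0 <= mask_l1 N a.
Proof.
  unfold mask_l1. rewrite sumN_sumZ, <- (Rmult_0_r (INR (2 * N + 1))), <- (sumZ_const (- Z.of_nat N)).
  apply sumZ_le. intros; apply Rabs_pos.
Qed.

Lemma mask_l1_le_mask_norm N a : mask_l1 N a <= 2 * mask_norm N a.
Proof.
  unfold mask_l1, mask_norm. rewrite !sumN_sumZ.
  rewrite (sumZ_ext _ _ _ (fun l => (if Z.even l then Rabs (a l) else 0)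
                                   + (if Z.even l then 0 else Rabs (a l))))
    by (intros; destruct Z.even; lra).
  rewrite sumZ_plus.
  pose proof (Rmax_l (sumZ (- Z.of_nat N) (2 * N + 1) (fun l => if Z.even l then Rabs (a l) else 0))
                     (sumZ (- Z.of_nat N) (2 * N + 1) (fun l => if Z.even l then 0 else Rabs (a l)))).
  pose proof (Rmax_r (sumZ (- Z.of_nat N) (2 * N + 1) (fun l => if Z.even l then Rabs (a l) else 0))
                     (sumZ (- Z.of_nat N) (2 * N + 1) (fun l => if Z.even l then 0 else Rabs (a l)))).
  lra.
Qed.

Lemma mask_l1_triangle N a b : mask_l1 N a <= mask_l1 N b + mask_l1 N (fun l => a l - b l).
Proof.
  unfold mask_l1. rewrite !sumN_sumZ, <- sumZ_plus. apply sumZ_le; intros.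
  replace (a l) with (b l + (a l - b l)) at 1 by lra. apply Rabs_triang.
Qed.

Lemma diffmask_minus N a b i :
  diffmask N (fun l => a l - b l) i = diffmask N a i - diffmask N b i.
Proof.
  unfold diffmask. rewrite !sumN_sumZ, <- sumZ_minus. apply sumZ_ext; intros.
  destruct (l <=? i)%Z; [destruct Z.even|]; lra.
Qed.

Lemma mask_l1_diffmask N a : mask_l1 N (diffmask N a) <= INR (2 * N + 1) * mask_l1 N a.
Proof.
  unfold mask_l1 at 1. rewrite sumN_sumZ, <- (sumZ_const (- Z.of_nat N)).
  apply sumZ_le; intros i _.
  unfold diffmask, mask_l1. rewrite !sumN_sumZ.
  eapply Rle_trans; [apply sumZ_Rabs|]. apply sumZ_le; intros.
  destruct (l <=? i)%Z; [destruct Z.even|]; rewrite ?Rabs_Ropp, ?Rabs_R0; try lra.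
  apply Rabs_pos.
Qed.

Lemma diffmask_supported_in N a : balanced N a -> supported_in N (diffmask N a).
Proof.
  intros Hbal i Hi. unfold balanced in Hbal. unfold diffmask. rewrite !sumN_sumZ in Hbal. rewrite sumN_sumZ.
  destruct (Z.ltb_spec i (- Z.of_nat N)).
  { apply sumZ_0. intros l Hl. destruct (Z.leb_spec l i); [lia|reflexivity]. }
  assert (Hle : forall l, (- Z.of_nat N <= l < - Z.of_nat N + Z.of_nat (2 * N + 1))%Z ->
                  (l <=? i)%Z = true) by (intros; apply Z.leb_le; lia).
  destruct (Z.even i) eqn:Ei.
  - rewrite (sumZ_ext _ _ _ (fun l => (if Z.even l then a l else 0) - (if Z.even l then 0 else a l))).
    + rewrite sumZ_minus. lra.
    + intros l Hl. rewrite Hle, Z.even_sub, Ei by exact Hl. destruct (Z.even l); simpl; lra.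
  - rewrite (sumZ_ext _ _ _ (fun l => (if Z.even l then 0 else a l) - (if Z.even l then a l else 0))).
    + rewrite sumZ_minus. lra.
    + intros l Hl. rewrite Hle, Z.even_sub, Ei by exact Hl. destruct (Z.even l); simpl; lra.
Qed.

Lemma diffmask_step N a l : supported_in N a ->
  diffmask N a l - diffmask N a (l - 2)%Z = a l - a (l - 1)%Z.
Proof.
  intros Hs. unfold diffmask. rewrite !sumN_sumZ, <- sumZ_minus.
  rewrite (sumZ_ext _ _ _ (fun m => (if Z.eqb m l then a l else 0)
                                   - (if Z.eqb m (l - 1) then a (l - 1)%Z else 0))).
  - rewrite sumZ_minus, !sumZ_indicator.
    assert (Hin : forall c,
      (if ((- Z.of_nat N <=? c) && (c <? - Z.of_nat N + Z.of_nat (2 * N + 1)))%Z%bool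
       then a c else 0) = a c).
    { intros c. destruct andb eqn:Hc; [reflexivity|]. symmetry. apply Hs.
      apply Bool.andb_false_iff in Hc. rewrite Z.leb_gt, Z.ltb_ge in Hc. lia. }
    rewrite !Hin. reflexivity.
  - intros m _.
    destruct (Z.eqb_spec m l) as [->|Hl]; [|destruct (Z.eqb_spec m (l - 1)) as [->|Hl1]].
    + rewrite Z.leb_refl, Z.sub_diag, (proj2 (Z.leb_gt l (l - 2))) by lia.
      rewrite (proj2 (Z.eqb_neq l (l - 1))) by lia. simpl. lra.
    + rewrite (proj2 (Z.leb_le (l - 1) l)), (proj2 (Z.leb_gt (l - 1) (l - 2))) by lia.
      replace (l - (l - 1))%Z with 1%Z by lia. simpl. lra.
    + destruct (Z.leb_spec m (l - 2)).
      * rewrite (proj2 (Z.leb_le m l)) by lia.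
        replace (l - 2 - m)%Z with (l - m + (-2))%Z by lia.
        rewrite Z.even_add. simpl. destruct (Z.even (l - m)); simpl; lra.
      * rewrite (proj2 (Z.leb_gt m l)) by lia. lra.
Qed.

Definition subdiv_term (f b : zseq) (i l : Z) : R :=
  if Z.even (i - l) then b l * f ((i - l) / 2)%Z else 0.

(* A window two entries wider than the support on each side, wide enough to
   absorb the shifts of the mask by 1 and 2 below. *)
Definition wide_sum (N : nat) (g : Z -> R) : R := sumZ (- Z.of_nat N - 2) (2 * N + 5) g.

Lemma wide_sum_widen N p m d1 g :
  (forall l, (l < p \/ p + Z.of_nat m <= l)%Z -> g l = 0) ->
  p = (- Z.of_nat N - 2 + Z.of_nat d1)%Z -> (d1 + m <= 2 * N + 5)%nat ->
  wide_sum N g = sumZ p m g.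
Proof.
  intros H Hp Hm. unfold wide_sum.
  replace (- Z.of_nat N - 2)%Z with (p - Z.of_nat d1)%Z by lia.
  replace (2 * N + 5)%nat with (d1 + m + (2 * N + 5 - d1 - m))%nat by lia.
  apply sumZ_widen, H.
Qed.

Lemma subdiv_term_0 f b i l : b l = 0 -> subdiv_term f b i l = 0.
Proof. intros H. unfold subdiv_term. rewrite H. destruct Z.even; lra. Qed.

Lemma subdiv_wide_sum N b f i : supported_in N b ->
  subdiv N b f i = wide_sum N (subdiv_term f b i).
Proof.
  intros Hs. unfold subdiv. rewrite sumN_sumZ.
  symmetry. apply (wide_sum_widen _ _ _ 2); [|lia|lia].
  intros l Hl. apply subdiv_term_0, Hs. lia.
Qed.

Lemma Dseq_subdiv_wide_sum N a f i : supported_in N a ->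
  Dseq (subdiv N a f) i = wide_sum N (subdiv_term f (fun l => a l - a (l - 1)%Z) i).
Proof.
  intros Hs. unfold Dseq. rewrite subdiv_wide_sum by exact Hs.
  assert (Hshift : subdiv N a f (i - 1)%Z = wide_sum N (subdiv_term f (fun l => a (l - 1)%Z) i)).
  { unfold subdiv. rewrite sumN_sumZ.
    rewrite (wide_sum_widen _ (- Z.of_nat N + 1) (2 * N + 1) 3);
      [|intros l Hl; apply subdiv_term_0, Hs; lia|lia|lia].
    replace (- Z.of_nat N)%Z with (- Z.of_nat N + 1 + (-1))%Z at 1 by lia.
    rewrite <- sumZ_shift. apply sumZ_ext. intros l _. unfold subdiv_term.
    replace (i - 1 - (l + -1))%Z with (i - l)%Z by lia.
    replace (l - 1)%Z with (l + -1)%Z by lia. reflexivity. }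
  rewrite Hshift. unfold wide_sum. rewrite <- sumZ_minus. apply sumZ_ext. intros l _.
  unfold subdiv_term. destruct Z.even; lra.
Qed.

Lemma subdiv_Dseq_wide_sum N q f i : supported_in N q ->
  subdiv N q (Dseq f) i = wide_sum N (subdiv_term f (fun l => q l - q (l - 2)%Z) i).
Proof.
  intros Hs.
  assert (Hsplit : subdiv N q (Dseq f) i = sumN N (subdiv_term f q i)
     - sumN N (fun l => if Z.even (i - l) then q l * f ((i - l) / 2 - 1)%Z else 0)).
  { unfold subdiv, subdiv_term, Dseq. rewrite !sumN_sumZ, <- sumZ_minus.
    apply sumZ_ext. intros. destruct Z.even; lra. }
  assert (Hshift : sumN N (fun l => if Z.even (i - l) then q l * f ((i - l) / 2 - 1)%Z else 0)
                   = wide_sum N (subdiv_term f (fun l => q (l - 2)%Z) i)).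
  { rewrite sumN_sumZ.
    rewrite (wide_sum_widen _ (- Z.of_nat N + 2) (2 * N + 1) 4);
      [|intros l Hl; apply subdiv_term_0, Hs; lia|lia|lia].
    replace (- Z.of_nat N)%Z with (- Z.of_nat N + 2 + (-2))%Z at 1 by lia.
    rewrite <- sumZ_shift. apply sumZ_ext. intros l _. unfold subdiv_term.
    replace (i - l)%Z with (i - (l + -2) + (-1) * 2)%Z by lia.
    rewrite Z.div_add, Z.even_add by lia. replace (l + -2)%Z with (l - 2)%Z by lia.
    destruct (Z.even (i - (l - 2))); simpl; do 2 f_equal; lia. }
  rewrite Hsplit, Hshift. change (sumN N (subdiv_term f q i)) with (subdiv N q f i).
  rewrite subdiv_wide_sum by exact Hs.
  unfold wide_sum. rewrite <- sumZ_minus. apply sumZ_ext. intros l _.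
  unfold subdiv_term. destruct Z.even; lra.
Qed.

Lemma Dseq_subdiv N a f : supported_in N a -> balanced N a ->
  Dseq (subdiv N a f) = subdiv N (diffmask N a) (Dseq f).
Proof.
  intros Hs Hbal. apply functional_extensionality; intro i.
  rewrite Dseq_subdiv_wide_sum, subdiv_Dseq_wide_sum by auto using diffmask_supported_in.
  f_equal. apply functional_extensionality; intro l. unfold subdiv_term.
  rewrite diffmask_step by exact Hs. reflexivity.
Qed.

(** * Sup-norm bounds *)

Definition bounded_by (f : zseq) (M : R) : Prop := forall i, Rabs (f i) <= M.

Lemma bounded_by_ge0 f M : bounded_by f M -> 0 <= M.
Proof. intros H. eapply Rle_trans; [apply Rabs_pos|apply (H 0%Z)]. Qed.

Lemma bounded_by_le f M M' : bounded_by f M -> M <= M' -> bounded_by f M'.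
Proof. intros H HM i. specialize (H i). lra. Qed.

Lemma subdiv_bounded_by N a f M : bounded_by f M -> bounded_by (subdiv N a f) (mask_l1 N a * M).
Proof.
  intros H i. pose proof (bounded_by_ge0 _ _ H) as HM.
  unfold subdiv, mask_l1. rewrite !sumN_sumZ. eapply Rle_trans; [apply sumZ_Rabs|].
  rewrite Rmult_comm, <- sumZ_mult_l. apply sumZ_le; intros l _.
  pose proof (Rabs_pos (a l)). destruct Z.even.
  - rewrite Rabs_mult, (Rmult_comm M). apply Rmult_le_compat_l; auto.
  - rewrite Rabs_R0. nra.
Qed.

Lemma subdiv_minus_seq N a f g i :
  subdiv N a f i - subdiv N a g i = subdiv N a (fun j => f j - g j) i.
Proof.
  unfold subdiv. rewrite !sumN_sumZ, <- sumZ_minus. apply sumZ_ext; intros.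
  destruct Z.even; lra.
Qed.

Lemma subdiv_minus_mask N a b f i :
  subdiv N a f i - subdiv N b f i = subdiv N (fun l => a l - b l) f i.
Proof.
  unfold subdiv. rewrite !sumN_sumZ, <- sumZ_minus. apply sumZ_ext; intros.
  destruct Z.even; lra.
Qed.

Lemma subdiv_scal N a c f : subdiv N a (fun j => c * f j) = fun i => c * subdiv N a f i.
Proof.
  apply functional_extensionality; intro i. unfold subdiv. rewrite !sumN_sumZ, <- sumZ_mult_l.
  apply sumZ_ext; intros. destruct Z.even; lra.
Qed.

Lemma iter_subdiv_scal N a m c f :
  Nat.iter m (subdiv N a) (fun j => c * f j) = fun i => c * Nat.iter m (subdiv N a) f i.
Proof. induction m as [|m IH]; simpl; auto. rewrite IH, subdiv_scal. reflexivity. Qed.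

Lemma iter_subdiv_bounded_by N a m f M : bounded_by f M ->
  bounded_by (Nat.iter m (subdiv N a) f) (mask_l1 N a ^ m * M).
Proof.
  intros H. induction m as [|m IH]; simpl.
  - rewrite Rmult_1_l. exact H.
  - rewrite Rmult_assoc. apply subdiv_bounded_by, IH.
Qed.

Lemma Lub_Rbar_real_bounds (E : R -> Prop) x0 M : E x0 -> (forall x, E x -> x <= M) ->
  (forall x, E x -> x <= real (Lub_Rbar E)) /\ real (Lub_Rbar E) <= M.
Proof.
  intros H0 HM. destruct (Lub_Rbar_correct E) as [Hub Hlub].
  assert (HlM : Rbar_le (Lub_Rbar E) (Finite M)) by (apply Hlub; intros x Hx; apply HM, Hx).
  revert Hub HlM. destruct (Lub_Rbar E) as [r| |]; simpl; intros Hub HlM.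
  - split; [intros x Hx; exact (Hub x Hx)|exact HlM].
  - contradiction.
  - destruct (Hub x0 H0).
Qed.

Lemma seq_norm_bounded_by f : bounded_seq f -> bounded_by f (seq_norm f).
Proof.
  intros [M HM] i. apply (Lub_Rbar_real_bounds _ (Rabs (f 0%Z)) M); [exists 0%Z; auto| |exists i; auto].
  intros x [j ->]. apply HM.
Qed.

Lemma seq_norm_le f M : bounded_by f M -> seq_norm f <= M.
Proof.
  intros HM. apply (Lub_Rbar_real_bounds _ (Rabs (f 0%Z)) M); [exists 0%Z; auto|].
  intros x [j ->]. apply HM.
Qed.

Lemma bounded_seq_Dseq f : bounded_seq f -> bounded_seq (Dseq f).
Proof.
  intros [M HM]. exists (M + M). intros j. unfold Dseq, Rminus.
  eapply Rle_trans; [apply Rabs_triang|]. rewrite Rabs_Ropp.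
  pose proof (HM j). pose proof (HM (j - 1)%Z). lra.
Qed.

(* [K] only serves to make the supremum defining [op_norm T] finite. *)
Lemma op_norm_bounded_by (T : zseq -> zseq) K :
  (forall c f, T (fun j => c * f j) = fun i => c * T f i) ->
  (forall f M, bounded_by f M -> bounded_by (T f) (K * M)) ->
  forall g M, bounded_by g M -> bounded_by (T g) (op_norm T * M).
Proof.
  intros Hhom HK g M Hg i. pose proof (bounded_by_ge0 _ _ Hg) as HM0.
  destruct (Req_dec M 0) as [->|HM].
  - assert (Hg0 : g = fun j => 0 * g j).
    { apply functional_extensionality; intro j. specialize (Hg j).
      pose proof (Rabs_pos (g j)). assert (g j = 0) as -> by (apply Rabs_eq_0; lra). lra. }
    rewrite Hg0, Hhom, Rmult_0_l, Rabs_R0. lra.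
  - set (g' := fun j => / M * g j).
    assert (Hg' : bounded_by g' 1).
    { intros j. unfold g'. rewrite Rabs_mult, Rabs_inv, (Rabs_pos_eq M) by lra.
      specialize (Hg j). apply (Rmult_le_reg_l M); [lra|]. field_simplify; lra. }
    assert (HTg' : seq_norm (T g') <= op_norm T).
    { assert (Hwit : bounded_seq g' /\ seq_norm g' <= 1 /\ seq_norm (T g') = seq_norm (T g'))
        by (split; [exists 1; exact Hg'|split; [apply seq_norm_le, Hg'|reflexivity]]).
      unfold op_norm. apply (Lub_Rbar_real_bounds _ (seq_norm (T g')) (Rmax K 0));
        [exists g'; exact Hwit| |exists g'; exact Hwit].
      intros x [f [Hf [Hf1 ->]]]. apply seq_norm_le.
      apply (bounded_by_le _ (K * seq_norm f)); [apply HK, seq_norm_bounded_by, Hf|].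
      pose proof (bounded_by_ge0 _ _ (seq_norm_bounded_by f Hf)).
      pose proof (Rmax_l K 0). pose proof (Rmax_r K 0). nra. }
    assert (Hi : Rabs (T g' i) <= seq_norm (T g'))
      by (apply seq_norm_bounded_by; exists (K * 1); apply HK, Hg').
    assert (HTg'i : T g' i = / M * T g i) by (unfold g'; rewrite Hhom; reflexivity).
    rewrite HTg'i, Rabs_mult, Rabs_inv, (Rabs_pos_eq M) in Hi by lra.
    apply (Rmult_le_compat_l M) in Hi; [|lra].
    rewrite <- Rmult_assoc, Rinv_r, Rmult_1_l in Hi by lra.
    rewrite Rmult_comm. eapply Rle_trans; [exact Hi|]. apply Rmult_le_compat_l; lra.
Qed.

Lemma iter_subdiv_op_norm N q n g M : bounded_by g M ->
  bounded_by (Nat.iter n (subdiv N q) g) (op_norm (Nat.iter n (subdiv N q)) * M).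
Proof.
  apply (op_norm_bounded_by _ (mask_l1 N q ^ n)).
  - intros c f. apply iter_subdiv_scal.
  - intros f M'. apply iter_subdiv_bounded_by.
Qed.

(** * Piecewise linear interpolants *)

Lemma Dseq_bounded_by_shift g D : bounded_by (Dseq g) D ->
  forall (d : nat) j, Rabs (g (j + Z.of_nat d)%Z - g j) <= INR d * D.
Proof.
  intros H d; induction d as [|d IH]; intros j.
  - rewrite Z.add_0_r, Rminus_diag, Rabs_R0. simpl. lra.
  - rewrite S_INR.
    replace (g (j + Z.of_nat (S d))%Z - g j)
      with (Dseq g (j + Z.of_nat (S d))%Z + (g (j + Z.of_nat d)%Z - g j))
      by (unfold Dseq; replace (j + Z.of_nat (S d) - 1)%Z with (j + Z.of_nat d)%Z by lia; ring).
    eapply Rle_trans; [apply Rabs_triang|]. specialize (IH j). specialize (H (j + Z.of_nat (S d))%Z).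
    lra.
Qed.

Lemma Dseq_bounded_by_dist g D : bounded_by (Dseq g) D ->
  forall p j, Rabs (g p - g j) <= IZR (Z.abs (p - j)) * D.
Proof.
  intros H p j. destruct (Z.le_ge_cases j p).
  - pose proof (Dseq_bounded_by_shift g D H (Z.to_nat (p - j)) j) as X.
    rewrite Z2Nat.id, Z.add_comm, Z.sub_add in X by lia.
    rewrite INR_IZR_INZ, Z2Nat.id in X by lia. rewrite Z.abs_eq by lia. exact X.
  - pose proof (Dseq_bounded_by_shift g D H (Z.to_nat (j - p)) p) as X.
    rewrite Z2Nat.id, Z.add_comm, Z.sub_add in X by lia.
    rewrite INR_IZR_INZ, Z2Nat.id in X by lia. rewrite Z.abs_neq, Rabs_minus_sym by lia.
    replace (- (p - j))%Z with (j - p)%Z by lia. exact X.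
Qed.

Lemma reproduces_constants_sum N a m : reproduces_constants N a ->
  sumN N (fun l => if Z.even (m - l) then a l else 0) = 1.
Proof.
  intros [HE HO]. rewrite sumN_sumZ in HE, HO |- *.
  destruct (Z.even m) eqn:Em; [rewrite <- HE|rewrite <- HO]; apply sumZ_ext; intros;
    rewrite Z.even_sub, Em; destruct (Z.even l); reflexivity.
Qed.

(* As [a] reproduces constants, [(S_a g) m - g j] is a combination, with
   weights [a l], of differences [g p - g j] with [|p - j| <= N + 1]. *)
Lemma subdiv_near N a g D j m : supported_in N a -> reproduces_constants N a ->
  bounded_by (Dseq g) D -> (2 * j <= m <= 2 * j + 2)%Z ->
  Rabs (subdiv N a g m - g j) <= mask_l1 N a * ((INR N + 1) * D).
Proof.
  intros Hs Hr HD Hm. pose proof (bounded_by_ge0 _ _ HD) as HD0.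
  assert (E : subdiv N a g m - g j
              = sumN N (fun l => if Z.even (m - l) then a l * (g ((m - l) / 2)%Z - g j) else 0)).
  { rewrite <- (Rmult_1_r (g j)) at 1. rewrite <- (reproduces_constants_sum N a m Hr).
    unfold subdiv. rewrite !sumN_sumZ, <- sumZ_mult_l, <- sumZ_minus. apply sumZ_ext; intros.
    destruct Z.even; ring. }
  rewrite E. unfold mask_l1. rewrite !sumN_sumZ. eapply Rle_trans; [apply sumZ_Rabs|].
  rewrite Rmult_comm, <- sumZ_mult_l. apply sumZ_le. intros l Hl.
  pose proof (Rabs_pos (a l)). pose proof (pos_INR N).
  destruct (Z.even (m - l)).
  - rewrite Rabs_mult, (Rmult_comm _ (Rabs (a l))). apply Rmult_le_compat_l; auto.
    eapply Rle_trans; [apply Dseq_bounded_by_dist, HD|]. apply Rmult_le_compat_r; auto.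
    replace (INR N + 1) with (IZR (Z.of_nat N + 1)) by (rewrite plus_IZR, <- INR_IZR_INZ; reflexivity).
    apply IZR_le. assert (Z.abs ((m - l) / 2 - j) <= Z.of_nat N + 1)%Z by (Z.div_mod_to_equations; lia).
    lia.
  - rewrite Rabs_R0. apply Rmult_le_pos; [|lra]. apply Rmult_le_pos; lra.
Qed.

Lemma PL_subdiv_step N a g D k x : supported_in N a -> reproduces_constants N a ->
  bounded_by (Dseq g) D ->
  Rabs (PL (S k) (subdiv N a g) x - PL k g x) <= (mask_l1 N a * (INR N + 1) + 1) * D.
Proof.
  intros Hs Hr HD. pose proof (bounded_by_ge0 _ _ HD) as HD0. unfold PL. cbv zeta.
  set (s := x * 2 ^ k). replace (x * 2 ^ S k) with (2 * s) by (unfold s; simpl; ring).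
  set (j := Int_part s). set (i := Int_part (2 * s)).
  destruct (base_Int_part s) as [Hj1 Hj2]. destruct (base_Int_part (2 * s)) as [Hi1 Hi2].
  fold j in Hj1, Hj2. fold i in Hi1, Hi2.
  assert (Hij : (2 * j <= i <= 2 * j + 1)%Z).
  { assert (2 * j < i + 1)%Z by (apply lt_IZR; rewrite plus_IZR, mult_IZR; simpl; lra).
    assert (i < 2 * j + 2)%Z by (apply lt_IZR; rewrite plus_IZR, mult_IZR; simpl; lra).
    lia. }
  set (X := mask_l1 N a * ((INR N + 1) * D)).
  pose proof (subdiv_near N a g D j i Hs Hr HD ltac:(lia)) as B1.
  pose proof (subdiv_near N a g D j (i + 1) Hs Hr HD ltac:(lia)) as B2.
  pose proof (HD (j + 1)%Z) as B3. unfold Dseq in B3. replace (j + 1 - 1)%Z with j in B3 by lia.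
  fold X in B1, B2.
  assert (T1 : 0 <= 2 * s - IZR i <= 1) by lra.
  assert (T2 : 0 <= s - IZR j <= 1) by lra.
  apply Rabs_le_between in B1, B2, B3. apply Rabs_le_between.
  replace ((mask_l1 N a * (INR N + 1) + 1) * D) with (X + D) by (unfold X; ring).
  split; nra.
Qed.

(** * Perturbed difference schemes *)

Section Perturbation.

Variables (N : nat) (q : zseq) (Q : nat -> zseq) (g : nat -> zseq) (delta M : R).
Hypothesis delta_ge0 : 0 <= delta.
Hypothesis delta_le1 : delta <= 1.
Hypothesis Q_close : forall m, mask_l1 N (fun l => Q m l - q l) <= delta.
Hypothesis g_S : forall m, g (S m) = subdiv N (Q m) (g m).
Hypothesis g_0 : bounded_by (g O) M.

Lemma subdiv_perturbed m i :
  g (S m) i = subdiv N q (g m) i + subdiv N (fun l => Q m l - q l) (g m) i.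
Proof. rewrite g_S, <- subdiv_minus_mask. ring. Qed.

Lemma perturbed_iter_bounded_by m : bounded_by (g m) ((mask_l1 N q + 1) ^ m * M).
Proof.
  induction m as [|m IH]; [rewrite pow_O, Rmult_1_l; exact g_0|].
  intros i. rewrite subdiv_perturbed. eapply Rle_trans; [apply Rabs_triang|].
  pose proof (subdiv_bounded_by N q _ _ IH i) as X1.
  pose proof (subdiv_bounded_by N (fun l => Q m l - q l) _ _ IH i) as X2.
  pose proof (bounded_by_ge0 _ _ IH) as HB.
  assert (mask_l1 N (fun l => Q m l - q l) * ((mask_l1 N q + 1) ^ m * M)
          <= 1 * ((mask_l1 N q + 1) ^ m * M))
    by (apply Rmult_le_compat_r; [exact HB|pose proof (Q_close m); lra]).
  simpl. lra.
Qed.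

Lemma perturbed_iter_deviation m :
  bounded_by (fun i => g m i - Nat.iter m (subdiv N q) (g O) i)
             (INR m * (mask_l1 N q + 1) ^ m * delta * M).
Proof.
  pose proof (mask_l1_ge0 N q) as Hq.
  induction m as [|m IH]; intros i.
  - simpl. rewrite Rminus_diag, Rabs_R0. lra.
  - pose proof (perturbed_iter_bounded_by m) as Hm. pose proof (bounded_by_ge0 _ _ Hm) as HB.
    pose proof (bounded_by_ge0 _ _ IH) as HD.
    simpl Nat.iter. rewrite subdiv_perturbed.
    replace (subdiv N q (g m) i + subdiv N (fun l => Q m l - q l) (g m) i
             - subdiv N q (Nat.iter m (subdiv N q) (g O)) i)
      with (subdiv N (fun l => Q m l - q l) (g m) i
            + subdiv N q (fun j => g m j - Nat.iter m (subdiv N q) (g O) j) i)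
      by (rewrite <- subdiv_minus_seq; ring).
    eapply Rle_trans; [apply Rabs_triang|].
    pose proof (subdiv_bounded_by N (fun l => Q m l - q l) _ _ Hm i) as X1.
    pose proof (subdiv_bounded_by N q _ _ IH i) as X2.
    set (B := mask_l1 N q + 1) in *.
    assert (mask_l1 N (fun l => Q m l - q l) * (B ^ m * M) <= delta * (B ^ m * M))
      by (apply Rmult_le_compat_r; [exact HB|apply Q_close]).
    assert (mask_l1 N q * (INR m * B ^ m * delta * M) <= B * (INR m * B ^ m * delta * M))
      by (apply Rmult_le_compat_r; [exact HD|unfold B; lra]).
    assert (delta * (B ^ m * M) <= B * (B ^ m * delta * M)).
    { replace (B * (B ^ m * delta * M)) with (B * (delta * (B ^ m * M))) by ring.
      rewrite <- (Rmult_1_l (delta * _)) at 1. apply Rmult_le_compat_r; [|unfold B; lra].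
      apply Rmult_le_pos; lra. }
    rewrite S_INR. simpl pow. lra.
Qed.

Lemma perturbed_contraction n eta :
  INR n * (mask_l1 N q + 1) ^ n * delta <= eta ^ n - op_norm (Nat.iter n (subdiv N q)) ->
  bounded_by (g n) (eta ^ n * M).
Proof.
  intros Hgap i. pose proof (bounded_by_ge0 _ _ g_0) as HM.
  pose proof (perturbed_iter_deviation n i) as H1.
  pose proof (iter_subdiv_op_norm N q n _ _ g_0 i) as H2.
  assert (INR n * (mask_l1 N q + 1) ^ n * delta * M
          <= (eta ^ n - op_norm (Nat.iter n (subdiv N q))) * M)
    by (apply Rmult_le_compat_r; assumption).
  replace (g n i) with ((g n i - Nat.iter n (subdiv N q) (g O) i) + Nat.iter n (subdiv N q) (g O) i)
    by ring.
  eapply Rle_trans; [apply Rabs_triang|]. simpl in H1. lra.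
Qed.

End Perturbation.

(* The constant [(B / eta) ^ (K0 + n)] absorbs the first [K0 + n] steps, where
   only the crude growth bound [B] is available. *)
Lemma geometric_decay (P : nat -> R -> Prop) B eta K0 n D :
  0 < eta < 1 -> 1 <= B -> 0 <= D -> (0 < n)%nat ->
  (forall k M M', P k M -> M <= M' -> P k M') ->
  P O D ->
  (forall k M, 0 <= M -> P k M -> P (S k) (B * M)) ->
  (forall k M, (K0 <= k)%nat -> 0 <= M -> P k M -> P (k + n)%nat (eta ^ n * M)) ->
  forall k, P k ((B / eta) ^ (K0 + n) * eta ^ k * D).
Proof.
  intros Heta HB HD Hn Hmono H0 Hgrow Hblock.
  assert (Hpow : forall k, P k (B ^ k * D)).
  { induction k as [|k IH]; [rewrite pow_O, Rmult_1_l; exact H0|].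
    rewrite <- tech_pow_Rmult, Rmult_assoc. apply Hgrow; [|exact IH].
    apply Rmult_le_pos; [apply pow_le; lra|exact HD]. }
  assert (HBeta : 1 <= B / eta)
    by (apply (Rmult_le_reg_r eta); [lra|]; unfold Rdiv; rewrite Rmult_assoc, Rinv_l; lra).
  intros k. induction k as [k IH] using (well_founded_induction lt_wf).
  destruct (Nat.lt_ge_cases k (K0 + n)) as [Hk|Hk].
  - apply (Hmono _ _ _ (Hpow k)). apply Rmult_le_compat_r; [exact HD|].
    replace (B ^ k) with ((B / eta) ^ k * eta ^ k)
      by (rewrite <- Rpow_mult_distr; f_equal; field; lra).
    apply Rmult_le_compat_r; [apply pow_le; lra|]. apply Rle_pow; [exact HBeta|lia].
  - replace k with ((k - n) + n)%nat by lia.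
    replace ((B / eta) ^ (K0 + n) * eta ^ (k - n + n) * D)
      with (eta ^ n * ((B / eta) ^ (K0 + n) * eta ^ (k - n) * D)) by (rewrite (pow_add eta); ring).
    apply Hblock; [lia| |apply IH; lia].
    apply Rmult_le_pos; [apply Rmult_le_pos; apply pow_le; lra|exact HD].
Qed.

(** * Asymptotically similar schemes *)

Lemma eventually_bounded_seq (u : nat -> R) K c : (forall k, (K <= k)%nat -> u k <= c) ->
  exists M, forall k, u k <= M.
Proof.
  intros H.
  assert (Hfin : forall K', exists M, forall k, (k < K')%nat -> u k <= M).
  { induction K' as [|K' [M HM]]; [exists 0; intros; lia|].
    exists (Rmax M (u K')). intros k Hk. destruct (Nat.eq_dec k K') as [->|].
    - apply Rmax_r.
    - eapply Rle_trans; [apply HM; lia|apply Rmax_l]. }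
  destruct (Hfin K) as [M HM]. exists (Rmax M c). intros k.
  destruct (Nat.lt_ge_cases k K).
  - eapply Rle_trans; [apply HM; auto|apply Rmax_l].
  - eapply Rle_trans; [apply H; auto|apply Rmax_r].
Qed.

Lemma exists_small_factor c gap : 0 <= c -> 0 < gap ->
  exists delta, 0 < delta <= 1 /\ c * delta <= gap.
Proof.
  intros Hc Hgap. exists (Rmin 1 (gap / (c + 1))). repeat split.
  - apply Rmin_pos; [lra|apply Rdiv_lt_0_compat; lra].
  - apply Rmin_l.
  - apply (Rle_trans _ (c * (gap / (c + 1)))); [apply Rmult_le_compat_l; [lra|apply Rmin_r]|].
    apply (Rmult_le_reg_r (c + 1)); [lra|]. field_simplify; nra.
Qed.

Section AsymptoticallySimilar.

Variables (N : nat) (astar : zseq) (A : nat -> zseq).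
Hypothesis A_supported : forall k, supported_in N (A k).
Hypothesis A_reproduces : forall k, reproduces_constants N (A k).
Hypothesis A_similar : forall eps, 0 < eps -> exists K : nat, forall k, (K <= k)%nat ->
  mask_norm N (fun i => A k i - astar i) < eps.

Lemma Dseq_level_S f0 k :
  Dseq (level N A f0 (S k)) = subdiv N (diffmask N (A k)) (Dseq (level N A f0 k)).
Proof. apply Dseq_subdiv, reproduces_constants_balanced; auto. Qed.

Lemma mask_l1_uniform_bound : exists alpha, 0 <= alpha /\ forall k, mask_l1 N (A k) <= alpha.
Proof.
  destruct (A_similar 1 ltac:(lra)) as [K1 HK1].
  destruct (eventually_bounded_seq (fun k => mask_l1 N (A k)) K1 (mask_l1 N astar + 2)) as [M HM].
  { intros k Hk. specialize (HK1 k Hk). pose proof (mask_l1_triangle N (A k) astar).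
    pose proof (mask_l1_le_mask_norm N (fun l => A k l - astar l)). lra. }
  exists (Rmax M 0). split; [apply Rmax_r|]. intros k. eapply Rle_trans; [apply HM|apply Rmax_l].
Qed.

Lemma diffmask_similar delta : 0 < delta -> exists K : nat, forall k, (K <= k)%nat ->
  mask_l1 N (fun l => diffmask N (A k) l - diffmask N astar l) <= delta.
Proof.
  intros Hdelta. pose proof (lt_0_INR (2 * N + 1) ltac:(lia)) as HN.
  destruct (A_similar (delta / (2 * INR (2 * N + 1)))) as [K HK].
  { apply Rdiv_lt_0_compat; lra. }
  exists K. intros k Hk. specialize (HK k Hk).
  replace (fun l => diffmask N (A k) l - diffmask N astar l)
    with (diffmask N (fun l => A k l - astar l))
    by (apply functional_extensionality; intro l; apply diffmask_minus).
  eapply Rle_trans; [apply mask_l1_diffmask|].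
  pose proof (mask_l1_le_mask_norm N (fun l => A k l - astar l)).
  apply (Rmult_lt_compat_l (2 * INR (2 * N + 1))) in HK; [|lra].
  replace (2 * INR (2 * N + 1) * (delta / (2 * INR (2 * N + 1)))) with delta in HK by (field; lra).
  nra.
Qed.

Variables (n : nat) (eta : R).
Hypothesis n_pos : (0 < n)%nat.
Hypothesis eta_range : 0 < eta < 1.
Hypothesis eta_rate : op_norm (Nat.iter n (subdiv N (diffmask N astar))) < eta ^ n.

Lemma Dseq_level_decay : exists C, 0 < C /\ forall f0, bounded_seq f0 -> forall k,
  bounded_by (Dseq (level N A f0 k)) (C * eta ^ k * seq_norm (Dseq f0)).
Proof.
  set (q := diffmask N astar).
  destruct mask_l1_uniform_bound as [alpha [Halpha0 Halpha]].
  destruct (exists_small_factor (INR n * (mask_l1 N q + 1) ^ n)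
              (eta ^ n - op_norm (Nat.iter n (subdiv N q)))) as [delta [Hdelta Hgap]].
  { apply Rmult_le_pos; [apply pos_INR|apply pow_le; pose proof (mask_l1_ge0 N q); lra]. }
  { unfold q. lra. }
  destruct (diffmask_similar delta ltac:(lra)) as [K0 HK0].
  set (B := INR (2 * N + 1) * alpha + 1).
  assert (HB : 1 <= B) by (unfold B; pose proof (pos_INR (2 * N + 1)); nra).
  exists ((B / eta) ^ (K0 + n)). split.
  { apply pow_lt, Rdiv_lt_0_compat; lra. }
  intros f0 Hf0.
  apply (geometric_decay (fun k M => bounded_by (Dseq (level N A f0 k)) M) B eta K0 n).
  - exact eta_range.
  - exact HB.
  - exact (bounded_by_ge0 _ _ (seq_norm_bounded_by _ (bounded_seq_Dseq _ Hf0))).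
  - exact n_pos.
  - intros k M M'. apply bounded_by_le.
  - apply seq_norm_bounded_by, bounded_seq_Dseq, Hf0.
  - intros k M HM Hk. rewrite Dseq_level_S. apply (bounded_by_le _ (mask_l1 N (diffmask N (A k)) * M)).
    + apply subdiv_bounded_by, Hk.
    + apply Rmult_le_compat_r; [exact HM|]. eapply Rle_trans; [apply mask_l1_diffmask|].
      unfold B. pose proof (pos_INR (2 * N + 1)). specialize (Halpha k). nra.
  - intros k M Hk HM Hlev.
    apply (perturbed_contraction N q (fun m => diffmask N (A (k + m)))
             (fun m => Dseq (level N A f0 (k + m))) delta).
    + lra.
    + lra.
    + intros m. apply HK0. lia.
    + intros m. rewrite Nat.add_succ_r. apply Dseq_level_S.
    + rewrite Nat.add_0_r. exact Hlev.
    + exact Hgap.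
Qed.

Lemma level_step_estimate : exists K, 0 < K /\ forall f0, bounded_seq f0 -> forall k x,
  Rabs (PL (S k) (level N A f0 (S k)) x - PL k (level N A f0 k) x)
  <= K * eta ^ k * seq_norm (Dseq f0).
Proof.
  destruct mask_l1_uniform_bound as [alpha [Halpha0 Halpha]].
  destruct Dseq_level_decay as [C [HC HDecay]].
  set (c := alpha * (INR N + 1) + 1).
  assert (Hc : 1 <= c) by (unfold c; pose proof (pos_INR N); nra).
  exists (c * C). split; [nra|]. intros f0 Hf0 k x.
  pose proof (HDecay f0 Hf0 k) as Hk. pose proof (bounded_by_ge0 _ _ Hk) as Hk0.
  eapply Rle_trans; [apply (PL_subdiv_step N (A k) _ _ k x (A_supported k) (A_reproduces k) Hk)|].
  replace (c * C * eta ^ k * seq_norm (Dseq f0)) with (c * (C * eta ^ k * seq_norm (Dseq f0))) by ring.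
  apply Rmult_le_compat_r; [exact Hk0|]. unfold c.
  apply Rplus_le_compat_r, Rmult_le_compat_r; [pose proof (pos_INR N); lra|apply Halpha].
Qed.

End AsymptoticallySimilar.

(** * Limits of geometrically converging sequences *)

Lemma telescoping_geometric (u : nat -> R) c eta : 0 < eta < 1 ->
  (forall k, Rabs (u (S k) - u k) <= c * eta ^ k) ->
  forall k m, (k <= m)%nat -> Rabs (u m - u k) <= c * eta ^ k / (1 - eta).
Proof.
  intros Heta H k m Hkm.
  assert (Hd : forall d, Rabs (u (k + d)%nat - u k) <= c * (eta ^ k - eta ^ (k + d)) / (1 - eta)).
  { induction d as [|d IH].
    - rewrite Nat.add_0_r, !Rminus_diag, Rabs_R0. unfold Rdiv. lra.
    - rewrite Nat.add_succ_r.
      replace (u (S (k + d)) - u k) with ((u (S (k + d)) - u (k + d)%nat) + (u (k + d)%nat - u k)) by ring.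
      eapply Rle_trans; [apply Rabs_triang|].
      replace (c * (eta ^ k - eta ^ S (k + d)) / (1 - eta))
        with (c * eta ^ (k + d) + c * (eta ^ k - eta ^ (k + d)) / (1 - eta)) by (simpl; field; lra).
      specialize (H (k + d)%nat). lra. }
  assert (Hc : 0 <= c).
  { specialize (H O). pose proof (Rabs_pos (u 1%nat - u O)). simpl in H. lra. }
  replace m with (k + (m - k))%nat by lia. eapply Rle_trans; [apply Hd|].
  unfold Rdiv. apply Rmult_le_compat_r; [left; apply Rinv_0_lt_compat; lra|].
  pose proof (pow_le eta (k + (m - k)) ltac:(lra)). nra.
Qed.

Lemma Rabs_limit_le (u : nat -> R) l b k :
  (forall m, (k <= m)%nat -> Rabs (u m - u k) <= b) ->
  (forall eps, 0 < eps -> exists K, forall m, (K <= m)%nat -> Rabs (u m - l) < eps) ->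
  Rabs (l - u k) <= b.
Proof.
  intros Hb Hl. apply Rle_plus_epsilon. intros eps Heps.
  destruct (Hl eps Heps) as [K HK]. specialize (HK (Nat.max K k) ltac:(lia)).
  specialize (Hb (Nat.max K k) ltac:(lia)).
  replace (l - u k) with ((u (Nat.max K k) - u k) - (u (Nat.max K k) - l)) by ring.
  unfold Rminus at 1. eapply Rle_trans; [apply Rabs_triang|]. rewrite Rabs_Ropp. lra.
Qed.

Lemma geometric_tail_small c eta eps : 0 < eta < 1 -> 0 < eps ->
  exists K, forall k, (K <= k)%nat -> c * eta ^ k / (1 - eta) < eps.
Proof.
  intros Heta Heps.
  destruct (pow_lt_1_zero eta ltac:(rewrite Rabs_pos_eq; lra) (eps * (1 - eta) / (Rabs c + 1)))
    as [K HK]; [apply Rdiv_lt_0_compat; pose proof (Rabs_pos c); nra|].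
  exists K. intros k Hk. specialize (HK k Hk). rewrite Rabs_pos_eq in HK by (apply pow_le; lra).
  pose proof (Rabs_pos c). pose proof (Rle_abs c).
  apply (Rmult_lt_compat_l (Rabs c + 1)) in HK; [|lra].
  replace ((Rabs c + 1) * (eps * (1 - eta) / (Rabs c + 1))) with (eps * (1 - eta)) in HK by (field; lra).
  apply (Rmult_lt_reg_r (1 - eta)); [lra|].
  replace (c * eta ^ k / (1 - eta) * (1 - eta)) with (c * eta ^ k) by (field; lra).
  pose proof (pow_le eta k ltac:(lra)). nra.
Qed.

Section GeometricSteps.

Variables (u : nat -> R -> R) (c eta : R).
Hypothesis eta_range : 0 < eta < 1.
Hypothesis u_step : forall k x, Rabs (u (S k) x - u k x) <= c * eta ^ k.

Lemma uniform_limit_of_geometric_steps : exists F : R -> R,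
  forall eps, 0 < eps -> exists K : nat, forall k, (K <= k)%nat -> forall x, Rabs (u k x - F x) < eps.
Proof.
  pose proof (fun x => telescoping_geometric (fun k => u k x) c eta eta_range (fun k => u_step k x)) as Htel.
  assert (Hcauchy : forall x, Cauchy_crit (fun k => u k x)).
  { intros x eps Heps. destruct (geometric_tail_small c eta (eps / 2) eta_range ltac:(lra)) as [K HK].
    exists K. intros p r Hp Hr. unfold Rdist.
    pose proof (Htel x K p Hp). pose proof (Htel x K r Hr). specialize (HK K (le_n K)).
    replace (u p x - u r x) with ((u p x - u K x) - (u r x - u K x)) by ring.
    unfold Rminus at 1. eapply Rle_lt_trans; [apply Rabs_triang|]. rewrite Rabs_Ropp. lra. }
  exists (fun x => proj1_sig (Rcomplete.R_complete _ (Hcauchy x))).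
  intros eps Heps. destruct (geometric_tail_small c eta eps eta_range Heps) as [K HK].
  exists K. intros k Hk x.
  destruct (Rcomplete.R_complete _ (Hcauchy x)) as [l Hl]. simpl.
  rewrite Rabs_minus_sym. eapply Rle_lt_trans; [|apply (HK k Hk)].
  apply (Rabs_limit_le (fun k => u k x)); [intros m Hm; apply (Htel x k m Hm)|].
  intros e He. destruct (Hl e He) as [K' HK']. exists K'. intros m Hm. apply HK'. exact Hm.
Qed.

Lemma limit_error_of_geometric_steps (F : R -> R) :
  (forall eps, 0 < eps -> exists K : nat, forall k, (K <= k)%nat -> forall x, Rabs (u k x - F x) < eps) ->
  forall k x, Rabs (F x - u k x) <= c * eta ^ k / (1 - eta).
Proof.
  intros HF k x. apply (Rabs_limit_le (fun k => u k x)).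
  - intros m Hm. apply (telescoping_geometric (fun k => u k x) c eta eta_range (fun k => u_step k x) k m Hm).
  - intros eps Heps. destruct (HF eps Heps) as [K HK]. exists K. intros m Hm. apply HK, Hm.
Qed.

End GeometricSteps.

(* Bernoulli's inequality [(1 - x) ^ n >= 1 - n x] gives a rate [eta = 1 - x]. *)
Lemma exists_rate mu n : mu < 1 -> (0 < n)%nat -> exists eta, 0 < eta < 1 /\ mu < eta ^ n.
Proof.
  intros Hmu Hn. pose proof (lt_0_INR n ltac:(lia)) as HnR.
  set (x := (1 - Rmax mu 0) / (2 * INR n)).
  assert (Hx : 0 < x <= 1 / 2).
  { pose proof (Rmax_r mu 0). assert (Rmax mu 0 < 1) by (apply Rmax_lub_lt; lra).
    unfold x. split; [apply Rdiv_lt_0_compat; lra|].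
    apply (Rmult_le_reg_r (2 * INR n)); [lra|]. field_simplify; [|lra].
    pose proof (le_INR 1 n ltac:(lia)). simpl in *. nra. }
  assert (Hbern : forall m, 1 - INR m * x <= (1 - x) ^ m).
  { induction m as [|m IH]; [simpl; lra|]. rewrite S_INR. simpl. pose proof (pos_INR m). nra. }
  exists (1 - x). split; [lra|]. specialize (Hbern n).
  replace (INR n * x) with ((1 - Rmax mu 0) / 2) in Hbern by (unfold x; field; lra).
  pose proof (Rmax_l mu 0). lra.
Qed.

Lemma pow_lt_compat_l r eta n : 0 <= r < eta -> (0 < n)%nat -> r ^ n < eta ^ n.
Proof.
  intros Hr Hn. destruct n as [|n]; [lia|]. clear Hn. induction n as [|n IH]; [simpl; lra|].
  change (r * r ^ S n < eta * eta ^ S n). pose proof (pow_le r (S n) (proj1 Hr)). nra.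
Qed.

Theorem theorem11 (N : nat) (astar : zseq) (A : nat -> zseq) (n : nat) :
  (0 < N)%nat ->
  supported_in N astar ->
  convergent N (fun _ => astar) ->
  (0 < n)%nat ->
  op_norm (Nat.iter n (subdiv N (diffmask N astar))) < 1 ->
  (forall k, supported_in N (A k)) ->
  (forall k, reproduces_constants N (A k)) ->
  (forall eps, 0 < eps -> exists K : nat, forall k, (K <= k)%nat ->
      mask_norm N (fun i => A k i - astar i) < eps) ->
  convergent N A /\
  (forall r eta : R,
     0 <= r -> r ^ n = op_norm (Nat.iter n (subdiv N (diffmask N astar))) ->
     r < eta -> eta < 1 ->
     exists C : R, 0 < C /\
       forall f0 : zseq, bounded_seq f0 ->
       forall F : R -> R, is_limit_function N A f0 F ->
       forall (k : nat) (x : R),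
         Rabs (F x - PL (S k) (level N A f0 (S k)) x) <= C * eta ^ k * seq_norm (Dseq f0)).
Proof.
  intros _ _ _ Hn Hmu Hs Hr Hsim. split.
  - destruct (exists_rate _ n Hmu Hn) as [eta [Heta Hrate]].
    destruct (level_step_estimate N astar A Hs Hr Hsim n eta Hn Heta Hrate) as [K [_ HK]].
    intros f0 Hf0.
    apply (uniform_limit_of_geometric_steps (fun k x => PL k (level N A f0 k) x)
             (K * seq_norm (Dseq f0)) eta Heta).
    intros k x. replace (K * seq_norm (Dseq f0) * eta ^ k) with (K * eta ^ k * seq_norm (Dseq f0)) by ring.
    apply HK, Hf0.
  - intros r eta Hr0 Hrn Hreta Heta1.
    assert (Heta : 0 < eta < 1) by lra.
    assert (Hrate : op_norm (Nat.iter n (subdiv N (diffmask N astar))) < eta ^ n)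
      by (rewrite <- Hrn; apply pow_lt_compat_l; [lra|exact Hn]).
    destruct (level_step_estimate N astar A Hs Hr Hsim n eta Hn Heta Hrate) as [K [HK0 HK]].
    exists (K / (1 - eta)). split; [apply Rdiv_lt_0_compat; lra|].
    intros f0 Hf0 F HF k x.
    set (D := seq_norm (Dseq f0)).
    assert (HD : 0 <= D) by exact (bounded_by_ge0 _ _ (seq_norm_bounded_by _ (bounded_seq_Dseq _ Hf0))).
    eapply Rle_trans.
    { apply (limit_error_of_geometric_steps (fun k x => PL k (level N A f0 k) x) (K * D) eta Heta); [|exact HF].
      intros j y. replace (K * D * eta ^ j) with (K * eta ^ j * D) by ring. apply HK, Hf0. }
    pose proof (pow_le eta k ltac:(lra)).
    replace (K * D * eta ^ S k / (1 - eta)) with (eta * (K / (1 - eta) * eta ^ k * D)) by (simpl; field; lra).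
    assert (0 <= K / (1 - eta) * eta ^ k * D)
      by (apply Rmult_le_pos; [apply Rmult_le_pos; [apply Rdiv_le_0_compat|]|]; lra).
    nra.
Qed.
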